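(* Fix $n\ge1$. For each $\delta\in\mathrm{MAD}(c^\times)$, the word $\Psi(\delta)$ lies in $\overline{\mathcal{M}}_{n+1}$ and $|\delta|=n-\#_{\mathtt{U}}(\Psi(\delta))$.
   Context: Place points $1,\ldots,n+1$ left to right on a horizontal line. An arc is a curve from a point $i$ to a point $j>i$ moving monotonically rightward and passing above or below each of $i+1,\ldots,j-1$; arcs are identified if they have the same endpoints and pass above the same points. A noncrossing arc diagram is a set of arcs that can be drawn so that no two share a left endpoint, no two share a right endpoint, and no two cross in their interiors; $|\delta|$ is its number of arcs. An arc from $i$ to $j$ is $c^\times$-sortable if, for each $k$ with $i<k<j$, it passes above $k$ when $k$ is odd and below $k$ when $k$ is even. $\mathrm{MAD}(c^\times)$ is the set of noncrossing arc diagrams consisting of $c^\times$-sortable arcs that are maximal under inclusion among such diagrams. For $\delta\in\mathrm{MAD}(c^\times)$, $\Psi(\delta)=\mathtt{M}_1\cdots\mathtt{M}_{n+1}$ where $\mathtt{M}_i=\mathtt{U}$ if $i\le n$ and $i+1$ is not the right endpoint of an arc of $\delta$; $\mathtt{M}_i=\mathtt{D}$ if $i\ge2$ and $i-1$ is not the left endpoint of an arc of $\delta$; and $\mathtt{M}_i=\mathtt{H}$ otherwise (it is part of the setup that the first two cases never both apply). A Motzkin path of length $m$ is a word in $\mathtt{U}$ (up step $(1,1)$), $\mathtt{D}$ (down step $(1,-1)$), $\mathtt{H}$ (horizontal step $(1,0)$) of length $m$ with equally many $\mathtt{U}$'s and $\mathtt{D}$'s and with every prefix having at least as many $\mathtt{U}$'s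 as $\mathtt{D}$'s. A peak is a consecutive occurrence $\mathtt{U}\mathtt{D}$; its height is $\#_\mathtt{U}(P)-\#_\mathtt{D}(P)$ where $P$ is the prefix ending with that $\mathtt{U}$. $\overline{\mathcal{M}}_{m}$ is the set of Motzkin paths of length $m$ with no peak of height $1$; $\#_\mathtt{U}(P)$ counts $\mathtt{U}$'s in $P$. *)

From mathcomp Require Import all_boot all_order all_algebra.
Set Implicit Arguments. Unset Strict Implicit. Unset Printing Implicit Defensive.

(* Points 1, ..., n+1 are elements of 'I_(n.+2) (index 0 is unused).
   An arc is (left endpoint, right endpoint, set of points it passes ABOVE);
   it passes below every other interior point. *)
Definition arc_t (n : nat) := ('I_n.+2 * 'I_n.+2 * {set 'I_n.+2})%type.

Section Arcs.
Variable n : nat.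
Implicit Types (a b : arc_t n) (x : 'I_n.+2).

Definition al a : nat := a.1.1.
Definition ar a : nat := a.1.2.

Definition is_arc a : bool :=
  [&& 0 < al a, al a < ar a & a.2 \subset [set k : 'I_n.+2 | al a < k < ar a]].

Definition interior a x : bool := al a < x < ar a.
Definition in_range a x : bool := al a <= x <= ar a.
Definition endpt a x : bool := (x == al a :> nat) || (x == ar a :> nat).

(* at the abscissa x, arc a is forced to be drawn strictly above arc b *)
Definition over a b x : bool :=
  [&& in_range a x, in_range b x &
   [|| [&& interior a x, interior b x, x \in a.2 & x \notin b.2],
       [&& endpt b x, interior a x & x \in a.2] |
       [&& endpt a x, interior b x & x \notin b.2]]].

(* two arcs cross in their interiors iff the forced relative position
   changes along their common x-range *)
Definition crossing a b : bool := [exists x, over a b x] && [exists x, over b a x].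

Definition noncrossing_diagram (d : {set arc_t n}) : bool :=
  [forall a in d, is_arc a] &&
  [forall a in d, forall b in d,
     (a != b) ==> [&& al a != al b, ar a != ar b & ~~ crossing a b]].

Definition csortable a : bool :=
  a.2 == [set k : 'I_n.+2 | (al a < k < ar a) && odd k].

Definition csort_diagram (d : {set arc_t n}) : bool :=
  noncrossing_diagram d && [forall a in d, csortable a].

Definition MAD (d : {set arc_t n}) : Prop :=
  csort_diagram d /\
  forall d' : {set arc_t n}, csort_diagram d' -> d \subset d' -> d' = d.
End Arcs.

Inductive step := U | D | H.

Definition isU (s : step) : bool := if s is U then true else false.
Definition isD (s : step) : bool := if s is D then true else false.
Definition countU (w : seq step) : nat := count isU w.
Definition countD (w : seq step) : nat := count isD w.

Definition Psi_letter (n : nat) (d : {set arc_t n}) (i : nat) : step :=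
  if (i <= n) && ~~ [exists a in d, ar a == i.+1] then U
  else if (2 <= i) && ~~ [exists a in d, al a == i.-1] then D
  else H.

Definition Psi (n : nat) (d : {set arc_t n}) : seq step :=
  [seq Psi_letter d i | i <- iota 1 n.+1].

Definition motzkin (m : nat) (w : seq step) : Prop :=
  size w = m /\ countU w = countD w /\
  forall k, k <= size w -> countD (take k w) <= countU (take k w).

(* no peak U D whose U ends a prefix of height 1 (positions i, i+1, 0-based) *)
Definition no_peak_height1 (w : seq step) : Prop :=
  forall i, i.+1 < size w -> nth H w i = U -> nth H w i.+1 = D ->
    countU (take i.+1 w) <> (countD (take i.+1 w)).+1.

Definition Mbar (m : nat) (w : seq step) : Prop := motzkin m w /\ no_peak_height1 w.

From Pilot Require Import Defs.
From mathcomp Require Import all_boot all_order all_algebra.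
From mathcomp Require Import zify.
Set Implicit Arguments. Unset Strict Implicit. Unset Printing Implicit Defensive.

(* M_i is U iff no arc ends at i+1, and D iff no arc starts at i-1.  Both cannot
   happen in a maximal diagram: c-sortable arcs are separated only at an
   endpoint x of one arc inside the other, on the side given by the parity of x,
   so the c-sortable arc from i-1 to i+1 lies above another c-sortable arc only
   if i is odd and below one only if i is even; it crosses nothing and could be
   added.  Hence the first k letters contain k - #{arcs ending by k+1} U's and
   k-1 - #{arcs starting before k} D's; as an arc ends after it starts, the
   height never goes negative, and the whole word has n - |delta| letters of
   each kind.  A peak of height 1 at letters i+1, i+2 forces every arc starting
   by i+1 to end by i+1, and no arc to start at i+1 or end at i+2; then the arc
   from i+1 to i+2 crosses nothing and could be added. *)

Lemma sum_nat_pred_unique (T : finType) (A : {pred T}) (P : pred T) :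
  {in A &, forall a b, P a -> P b -> a = b} ->
  \sum_(a in A) (P a : nat) = [exists a in A, P a].
Proof.
move=> P_uniq; case: existsP => [[a /andP[Aa Pa]] | noP].
  rewrite (bigD1 a) //= Pa big1 // => b /andP[Ab ba]; apply/eqP; rewrite eqb0.
  by apply: contra ba => Pb; rewrite (P_uniq b a).
rewrite big1 // => b Ab; apply/eqP; rewrite eqb0; apply/negP => Pb.
by apply: noP; exists b; rewrite Ab.
Qed.

Lemma count_map_iota1S (T : Type) (p : pred T) (f : nat -> T) k :
  count p (map f (iota 1 k.+1)) = count p (map f (iota 1 k)) + p (f k.+1).
Proof. by rewrite -{1}(addn1 k) iotaD map_cat count_cat /= add1n addn0. Qed.

Section Crossing.
Variable n : nat.
Implicit Types (a b : arc_t n) (x : 'I_n.+2).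

Lemma ar_ltn a : ar a < n.+2.
Proof. exact: ltn_ord. Qed.

Lemma crossingC a b : crossing a b = crossing b a.
Proof. exact: andbC. Qed.

Lemma over_interior a b x : Defs.over a b x -> interior a x || interior b x.
Proof.
case/and3P=> _ _.
by case: (interior a x) (interior b x) => [] [] //=; rewrite !andbF.
Qed.

Lemma csortable_mem a x : csortable a -> (x \in a.2) = interior a x && odd x.
Proof. by move/eqP->; rewrite inE. Qed.

(* Two c-sortable arcs pass on the same side of a common interior point, so
   only an endpoint of one arc lying inside the other can separate them. *)
Lemma over_csortable a b x : csortable a -> csortable b -> Defs.over a b x ->
  (endpt b x && interior a x && odd x) || (endpt a x && interior b x && ~~ odd x).
Proof.
move=> ca cb; rewrite /Defs.over (csortable_mem x ca) (csortable_mem x cb).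
by case: (interior a x) (interior b x) (endpt a x) (endpt b x) (odd x)
  => [] [] [] [] [] /=; rewrite ?andbF ?andbT ?orbF.
Qed.

Lemma csortable_len2_noncrossing a b : csortable a -> csortable b ->
  ar a = (al a).+2 -> ~~ crossing a b.
Proof.
move=> ca cb len2.
have mid_odd x : Defs.over a b x -> odd (al a).+1.
  case/(over_csortable ca cb)/orP => [/andP[/andP[_ ia] ox]|/andP[/andP[ea _] ex]].
    by rewrite (_ : (al a).+1 = x) //; move: ia; rewrite /interior len2; lia.
  by case/orP: ea => /eqP ex'; rewrite ex' ?len2 /= ?negbK in ex.
have mid_even x : Defs.over b a x -> ~~ odd (al a).+1.
  case/(over_csortable cb ca)/orP => [/andP[/andP[ea _] ex]|/andP[/andP[_ ia] ox]].
    by case/orP: ea => /eqP ex'; rewrite ex' ?len2 /= ?negbK in ex *.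
  by rewrite (_ : (al a).+1 = x) //; move: ia; rewrite /interior len2; lia.
apply/andP=> -[/existsP[x abx] /existsP[y bay]].
by move: (mid_odd x abx) (mid_even y bay) => ->.
Qed.

Lemma unit_arc_crossing a b : ar a = (al a).+1 -> crossing a b ->
  al b < ar a /\ al a < ar b.
Proof.
move=> len1 /andP[/existsP[x abx] _]; move: (abx) => /and3P[ra _ _].
move: abx => /over_interior; rewrite /interior /in_range len1 in ra *; lia.
Qed.

Lemma exists_csortable_arc (i j : nat) : 0 < i < j -> j <= n.+1 ->
  exists a, [/\ is_arc a, csortable a, al a = i & ar a = j].
Proof.
move=> /andP[i0 ij] jn.
have ei : (inord i : 'I_n.+2) = i :> nat by rewrite inordK //; lia.
have ej : (inord j : 'I_n.+2) = j :> nat by rewrite inordK //; lia.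
exists (inord i, inord j, [set k : 'I_n.+2 | (i < k < j) && odd k]).
rewrite /is_arc /csortable /al /ar /= ei ej i0 ij eqxx; split=> //.
by apply/subsetP => k; rewrite !inE => /andP[].
Qed.

End Crossing.

Definition starts_at n (d : {set arc_t n}) (k : nat) := [exists a in d, al a == k].
Definition ends_at n (d : {set arc_t n}) (k : nat) := [exists a in d, ar a == k].

Section Diagrams.
Variables (n : nat) (d : {set arc_t n}).
Implicit Types (a b : arc_t n).

Lemma csort_diagram_noncrossing : csort_diagram d -> noncrossing_diagram d.
Proof. by case/andP. Qed.

Lemma csort_diagram_csortable : csort_diagram d -> {in d, forall a, csortable a}.
Proof. by case/andP=> _ /forallP sd a ad; exact: implyP (sd a) ad. Qed.

Lemma csort_diagramU1 a : csort_diagram d -> is_arc a -> csortable a ->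
  {in d, forall b, [&& al b != al a, ar b != ar a & ~~ crossing a b]} ->
  csort_diagram (a |: d).
Proof.
move=> /andP[/andP[/forallP arcs /forallP pairs] /forallP sorts] arc_a ca fresh.
apply/andP; split; last first.
  by apply/forallP => b; rewrite in_setU1; case: eqP => [->|_] //=; exact: sorts b.
apply/andP; split.
  by apply/forallP => b; rewrite in_setU1; case: eqP => [->|_] //=; exact: arcs b.
apply/forallP => b; rewrite in_setU1; apply/implyP => /predU1P[->|bd];
  apply/forallP => c; rewrite in_setU1; apply/implyP => /predU1P[->|cd].
- by rewrite eqxx.
- have /and3P[lc rc xc] := fresh c cd.
  by rewrite (eq_sym (al a)) (eq_sym (ar a)) lc rc xc implybT.
- by have /and3P[lb rb xb] := fresh b bd; rewrite lb rb crossingC xb implybT.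
- exact: implyP (forallP (implyP (pairs b) bd) c) cd.
Qed.

Definition nleft k := \sum_(a in d) (al a < k : nat).
Definition nright k := \sum_(a in d) (ar a < k : nat).

Lemma nright_card : nright n.+2 = #|d|.
Proof. by rewrite /nright -sum1_card; apply: eq_bigr => a _; rewrite ar_ltn. Qed.

Section Noncrossing.
Hypothesis ncd : noncrossing_diagram d.

Lemma noncrossing_arc : {in d, forall a, 0 < al a < ar a}.
Proof.
by case/andP: ncd => /forallP arcs _ a ad; case/and3P: (implyP (arcs a) ad) => -> ->.
Qed.

Lemma noncrossing_endpoints a b : a \in d -> b \in d -> a != b ->
  al a != al b /\ ar a != ar b.
Proof.
case/andP: ncd => _ /forallP pairs ad bd ab.
by case/and3P: (implyP (implyP (forallP (implyP (pairs a) ad) b) bd) ab) => -> ->.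
Qed.

Lemma noncrossing_al_inj : {in d &, injective (@al n)}.
Proof.
move=> a b ad bd lab; apply/eqP; apply: contraT => ab.
by have [] := noncrossing_endpoints ad bd ab; rewrite lab eqxx.
Qed.

Lemma noncrossing_ar_inj : {in d &, injective (@ar n)}.
Proof.
move=> a b ad bd rab; apply/eqP; apply: contraT => ab.
by have [] := noncrossing_endpoints ad bd ab; rewrite rab eqxx.
Qed.

Lemma nleftS k : nleft k.+1 = nleft k + starts_at d k.
Proof.
rewrite /nleft /starts_at -(sum_nat_pred_unique (P := fun a => al a == k)); last first.
  by move=> a b ad bd /eqP la /eqP lb; apply: noncrossing_al_inj; rewrite ?la ?lb.
by rewrite -big_split; apply: eq_bigr => a _; rewrite ltnS leq_eqVlt; case: ltngtP.
Qed.

Lemma nrightS k : nright k.+1 = nright k + ends_at d k.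
Proof.
rewrite /nright /ends_at -(sum_nat_pred_unique (P := fun a => ar a == k)); last first.
  by move=> a b ad bd /eqP ra /eqP rb; apply: noncrossing_ar_inj; rewrite ?ra ?rb.
by rewrite -big_split; apply: eq_bigr => a _; rewrite ltnS leq_eqVlt; case: ltngtP.
Qed.

Lemma starts_at0 : starts_at d 0 = false.
Proof.
by apply/existsP => -[a /andP[ad /eqP la]]; have := noncrossing_arc ad; rewrite la.
Qed.

Lemma nright2 : nright 2 = 0.
Proof.
by rewrite /nright big1 // => a /noncrossing_arc ha; apply/eqP; rewrite eqb0 -leqNgt; lia.
Qed.

Lemma nleft_card : nleft n.+1 = #|d|.
Proof.
rewrite /nleft -sum1_card; apply: eq_bigr => a /noncrossing_arc ha.
suff -> : al a < n.+1 by [].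
by move: ha (ar_ltn a); lia.
Qed.

Lemma nright_le_nleft k : nright k.+1 <= nleft k.
Proof.
apply: leq_sum => a /noncrossing_arc ha.
by case: (ltnP (ar a) k.+1) => // h; have -> : al a < k by lia.
Qed.

Lemma nright_lt_nleft b k : b \in d -> al b < k <= ar b -> nright k < nleft k.
Proof.
move=> bd /andP[lb rb]; rewrite /nright /nleft (bigD1 b) //= [X in _ < X](bigD1 b) //=.
rewrite lb (ltnNge (ar b)) rb add0n add1n ltnS.
apply: leq_sum => a /andP[/noncrossing_arc ha _].
by case: (ltnP (ar a) k) => // h; have -> : al a < k by lia.
Qed.

End Noncrossing.

Section Maximal.
Hypothesis maxd : MAD d.

Lemma MAD_blocked_arc a : is_arc a -> csortable a ->
  {in d, forall b, ~~ crossing a b} -> starts_at d (al a) || ends_at d (ar a).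
Proof.
move=> arc_a ca nx; apply: contraT; rewrite negb_or => /andP[/existsPn nl /existsPn nr].
have [sd maximal] := maxd.
have ad : a \in d.
  rewrite -(maximal (a |: d)) ?setU11 ?subsetUr // csort_diagramU1 // => b bd.
  by move: (nl b) (nr b); rewrite bd nx // => -> ->.
by move: (nl a); rewrite ad eqxx.
Qed.

Lemma MAD_gap2 j : 0 < j -> j.+2 <= n.+1 -> starts_at d j || ends_at d j.+2.
Proof.
move=> j0 jn; have [|a [arc_a ca la ra]] := @exists_csortable_arc n j j.+2 _ jn.
  by rewrite j0 /=.
rewrite -ra -la; apply: MAD_blocked_arc => // b bd.
apply: csortable_len2_noncrossing => //; last by rewrite la ra.
exact: csort_diagram_csortable maxd.1 b bd.
Qed.

Lemma MAD_unit_gap t : 0 < t <= n -> {in d, forall b, al b <= t -> ar b <= t} ->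
  starts_at d t || ends_at d t.+1.
Proof.
move=> /andP[t0 tn] closed.
have [|a [arc_a ca la ra]] := @exists_csortable_arc n t t.+1 _ tn; first by rewrite t0 /=.
rewrite -ra -la; apply: MAD_blocked_arc => // b bd.
apply/negP => /unit_arc_crossing; rewrite la ra => -[] // lb rb.
by have := closed b bd; lia.
Qed.

End Maximal.
End Diagrams.

Section Psi.
Variables (n : nat) (d : {set arc_t n}).
Hypothesis maxd : MAD d.
Let ncd : noncrossing_diagram d := csort_diagram_noncrossing maxd.1.

Lemma size_Psi : size (Psi d) = n.+1.
Proof. by rewrite size_map size_iota. Qed.

Lemma take_Psi k : k <= n.+1 -> take k (Psi d) = map (Psi_letter d) (iota 1 k).
Proof. by move=> kn; rewrite -map_take take_iota (minn_idPl kn). Qed.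

Lemma nth_Psi i : i < n.+1 -> nth H (Psi d) i = Psi_letter d i.+1.
Proof. by move=> ilt; rewrite (nth_map 0) ?size_iota // nth_iota. Qed.

Lemma isU_Psi_letter i : isU (Psi_letter d i) = (i <= n) && ~~ ends_at d i.+1.
Proof. by rewrite /Psi_letter; case: ifP => //; case: ifP. Qed.

(* By [MAD_gap2], the U and D cases of [Psi_letter] never both apply. *)
Lemma isD_Psi_letter i : isD (Psi_letter d i) = (1 < i) && ~~ starts_at d i.-1.
Proof.
rewrite /Psi_letter -/(ends_at d i.+1) -/(starts_at d i.-1).
case: ifP => [/andP[iln noend] | _]; last by case: ifP.
apply/esym/negbTE; rewrite negb_and negbK.
case: i iln noend => [|[|j]] //= jn noend.
by have := MAD_gap2 maxd (ltn0Sn j) jn; rewrite (negbTE noend) orbF.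
Qed.

Lemma countU_Psi_prefix k : k <= n -> countU (take k (Psi d)) + nright d k.+2 = k.
Proof.
elim: k => [_|k IH kn]; first by rewrite take0 nright2.
have kn1 : k.+1 <= n.+1 by lia.
rewrite take_Psi // /countU count_map_iota1S -take_Psi ?(ltnW kn1) // -/(countU _).
by rewrite nrightS // isU_Psi_letter kn; move: (IH (ltnW kn)); case: ends_at => /=; lia.
Qed.

Lemma countD_Psi_prefix k : k <= n.+1 -> countD (take k (Psi d)) + nleft d k = k.-1.
Proof.
elim: k => [_|k IH kn]; first by rewrite take0 /nleft big1.
rewrite take_Psi // /countD count_map_iota1S -take_Psi ?(ltnW kn) // -/(countD _).
rewrite nleftS // isD_Psi_letter; move: (IH (ltnW kn)).
case: k {IH kn} => [|k]; first by rewrite starts_at0 //=; lia.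
by case: (starts_at d k.+1) => /=; lia.
Qed.

Lemma countU_Psi : countU (Psi d) + #|d| = n.
Proof.
rewrite -(take_size (Psi d)) size_Psi take_Psi // /countU count_map_iota1S.
by rewrite isU_Psi_letter ltnn /= addn0 -take_Psi // -/(countU _) -(nright_card d)
  countU_Psi_prefix.
Qed.

Lemma countD_Psi : countD (Psi d) + #|d| = n.
Proof.
by rewrite -(take_size (Psi d)) size_Psi -(nleft_card ncd) countD_Psi_prefix.
Qed.

Lemma Psi_prefix_height k : k <= n.+1 ->
  countD (take k (Psi d)) <= countU (take k (Psi d)).
Proof.
rewrite leq_eqVlt => /predU1P[->|kn].
  by rewrite -size_Psi take_size; have := countU_Psi; have := countD_Psi; lia.
have := countU_Psi_prefix kn; have := countD_Psi_prefix (ltnW kn).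
by have := nright_le_nleft ncd k; rewrite (nrightS ncd k.+1); lia.
Qed.

Lemma Psi_no_peak_height1 : no_peak_height1 (Psi d).
Proof.
move=> i; rewrite size_Psi => ilt.
rewrite (nth_Psi (ltnW ilt)) (nth_Psi ilt) => up down height1.
have := isU_Psi_letter i.+1; rewrite up => /esym/andP[iln noend].
have := isD_Psi_letter i.+2; rewrite down => /esym/andP[_ nostart].
have balanced : nright d i.+2 = nleft d i.+2.
  have := countU_Psi_prefix iln; have := countD_Psi_prefix (leqW iln).
  by rewrite (nrightS ncd i.+2) (nleftS ncd i.+1) (negbTE noend) (negbTE nostart); lia.
have closed : {in d, forall b, al b <= i.+1 -> ar b <= i.+1}.
  move=> b bd lb; rewrite leqNgt; apply/negP => rb.
  have := nright_lt_nleft ncd bd (k := i.+2).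
  by rewrite balanced ltnn ltnS lb rb => /(_ isT).
have := MAD_unit_gap maxd (t := i.+1) iln closed.
by rewrite (negbTE noend) (negbTE nostart).
Qed.

End Psi.

Unset Implicit Arguments.

Theorem proposition8p9 (n : nat) (hn : 1 <= n) (d : {set arc_t n}) :
  MAD d ->
  Mbar n.+1 (Psi d) /\
  (#|d|%:Z = n%:Z - (countU (Psi d))%:Z)%R.
Proof.
move=> maxd; have countU_eq := countU_Psi maxd; have countD_eq := countD_Psi maxd.
split; last by lia.
split; last exact: Psi_no_peak_height1.
split; first exact: size_Psi.
split; first by lia.
by rewrite size_Psi; exact: Psi_prefix_height.
Qed.
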